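(* Let $D\ge1$, $f\in(0,1]$, and let $F=(F_{\alpha\beta})_{\alpha,\beta=1}^D$ be a real symmetric matrix with $f\le F_{\alpha\beta}\le1$ for all $\alpha,\beta$. Let $\{|\alpha\rangle\}$ be an orthonormal basis of $\mathbb C^D$ and define on $\mathbb C^D\otimes\mathbb C^D$ the operator $K=\frac1D\sum_{\alpha,\beta}F_{\alpha\beta}^2\,|\alpha,\alpha\rangle\langle\beta,\beta|$. Then $K$ has a unique (up to scalar) eigenvector $|\Psi\rangle=\sum_\alpha x_\alpha|\alpha,\alpha\rangle$ of largest eigenvalue $\lambda$, with all $x_\alpha>0$, $\max_\alpha x_\alpha/\min_\alpha x_\alpha\le 1/f^2$, and $f^2\le\lambda\le1$; moreover every other eigenvalue of $K$ is at most $(1-f^4)\lambda$. Consequently, for any real $a$, $\varepsilon>0$, the operator $M=a\,\mathbb I+\varepsilon^2 K$ (restricted to $\mathbb C^D\otimes\mathbb C^D$) has unique top eigenvector $|\Psi\rangle$ with eigenvalue $a+\varepsilon^2\lambda$, and spectral gap at least $\varepsilon^2f^4\lambda$. *)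

From HB Require Import structures.
From mathcomp Require Import all_boot all_order all_algebra.
From mathcomp Require Import complex mxtens.
Set Implicit Arguments. Unset Strict Implicit. Unset Printing Implicit Defensive.
Import Order.TTheory GRing.Theory Num.Theory.
Local Open Scope ring_scope.
Local Open Scope complex_scope.

Definition ket (R : rcfType) (D : nat) (a : 'I_D) : 'cV[R[i]]_D := delta_mx a 0.

Definition ket2 (R : rcfType) (D : nat) (a : 'I_D) : 'cV[R[i]]_(D * D) :=
  ket R a *t ket R a.

(* K = (1/D) sum_{alpha,beta} F_{alpha beta}^2 |alpha,alpha><beta,beta|.
   The bra <beta,beta| is the conjugate transpose of |beta,beta>; its entries
   are 0/1, so it equals the plain transpose. *)
Definition Kop (R : rcfType) (D : nat) (F : 'M[R]_D) : 'M[R[i]]_(D * D) :=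
  (D%:R)^-1 *: \sum_(a < D) \sum_(b < D)
     ((F a b ^+ 2)%:C *: (ket2 R a *m (ket2 R b)^T)).

Definition Psi (R : rcfType) (D : nat) (x : 'I_D -> R) : 'cV[R[i]]_(D * D) :=
  \sum_(a < D) (x a)%:C *: ket2 R a.

Definition eigvec (C : fieldType) (n : nat) (M : 'M[C]_n) (mu : C) (v : 'cV[C]_n) :=
  v != 0 /\ M *m v = mu *: v.

Definition top_gap (R : rcfType) (n : nat) (M : 'M[R[i]]_n) (top gap : R)
    (v0 : 'cV[R[i]]_n) : Prop :=
  [/\ eigvec M top%:C v0,
      (forall mu v, eigvec M mu v -> mu <= top%:C),
      (forall v, eigvec M top%:C v -> exists c : R[i], v = c *: v0) &
      (forall mu v, eigvec M mu v -> mu != top%:C -> mu <= (top - gap)%:C)].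

From HB Require Import structures.
From mathcomp Require Import all_boot all_order all_algebra.
From mathcomp Require Import complex mxtens.
From mathcomp Require Import ring.
Set Implicit Arguments. Unset Strict Implicit. Unset Printing Implicit Defensive.
Import Order.TTheory GRing.Theory Num.Theory Num.Def.
Local Open Scope ring_scope.

(* On the span of the kets |a,a>, K acts as the real symmetric matrix
   G_ab = F_ab^2 / D with entries in [f^2/D, 1/D], and K vanishes on the orthogonal
   complement; so everything reduces to a Perron-Frobenius statement for G.
   By the spectral theorem G has a top eigenvector; its entrywise absolute value has the
   same norm and no smaller Rayleigh quotient, hence is again a top eigenvector, and
   positivity of G makes it strictly positive. Comparing the rows of G x = l x bounds l
   and the ratios x_a / x_b. For the gap, G - c x x^T with c = m l^2 / (M S)^2 is still
   entrywise nonnegative, agrees with G on the orthogonal complement of x, and has x as an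
   eigenvector of eigenvalue l - c |x|^2 <= (1 - f^4) l. Since an eigenvalue of a
   nonnegative matrix is bounded in modulus by the eigenvalue of any positive eigenvector,
   every eigenvalue with eigenvector orthogonal to x is at most (1 - f^4) l: this gives
   the gap, and, applied to y - (x.y / x.x) x, the simplicity of l. *)

Section Rayleigh.
Variables (C : numClosedFieldType) (n : nat).
Local Open Scope sesquilinear_scope.
Implicit Types (A : 'M[C]_n) (y z : 'cV[C]_n) (mu : C).

Definition qform (A : 'M[C]_n) (z : 'cV[C]_n) : C := (z ^t* *m A *m z) 0 0.

Lemma qformE A z : qform A z = \sum_i \sum_j (z i 0)^* * A i j * z j 0.
Proof.
rewrite /qform -mulmxA mxE; apply: eq_bigr => i _; rewrite !mxE mulr_sumr.
by apply: eq_bigr => j _; rewrite mulrA.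
Qed.

Lemma qform_diag (d : 'rV[C]_n) z :
  qform (diag_mx d) z = \sum_k d 0 k * `|z k 0| ^+ 2.
Proof.
rewrite /qform -mulmxA mxE; apply: eq_bigr => k _.
by rewrite mul_diag_mx !mxE normCKC mulrCA.
Qed.

Lemma qform1 z : qform 1%:M z = \sum_k `|z k 0| ^+ 2.
Proof.
by rewrite -diag_const_mx qform_diag; apply: eq_bigr => k _; rewrite mxE mul1r.
Qed.

Lemma qform_unitary (P A : 'M[C]_n) z : qform (P ^t* *m A *m P) z = qform A (P *m z).
Proof. by rewrite /qform trmx_mul map_mxM !mulmxA. Qed.

Lemma eigvec_diag_mx (d : 'rV[C]_n) mu v : eigvec (diag_mx d) mu v -> exists k, mu = d 0 k.
Proof.
case=> /matrix0Pn [k [j]]; rewrite ord1 => vk /matrixP /(_ k 0).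
by rewrite mul_diag_mx !mxE => /(mulIf vk); exists k.
Qed.

Section Hermitian.
Variable G : 'M[C]_n.
Hypothesis G_herm : G \is hermsymmx.
Let P := spectralmx G.
Let d := spectral_diag G.
Let P_unitary : P \is unitarymx := spectral_unitarymx G.

Let unitary_trmxC_mul : P ^t* *m P = 1%:M.
Proof. by rewrite -invmx_unitary // mulVmx // unitarymx_unit. Qed.

Lemma hermitian_spectralE : G = P ^t* *m diag_mx d *m P.
Proof. by rewrite -invmx_unitary //; apply/orthomx_spectralP/hermitian_normalmx. Qed.

Lemma spectral_diag_real k : d 0 k \is Num.real.
Proof. by have /mxOverP := hermitian_spectral_diag_real G_herm; apply. Qed.

Lemma eigvec_spectral mu y : eigvec G mu y -> eigvec (diag_mx d) mu (P *m y).
Proof.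
case=> yn Gy; split.
  by apply: contraNneq yn => Py0; rewrite -(mulKmx (unitarymx_unit P_unitary) y) Py0 mulmx0.
rewrite scalemxAr -Gy {1}hermitian_spectralE -!mulmxA.
by rewrite (mulmxA P) (unitarymxP P_unitary) mul1mx.
Qed.

Lemma hermitian_eigenvalue_real mu y : eigvec G mu y -> mu \is Num.real.
Proof. by case/eigvec_spectral/eigvec_diag_mx => k ->; apply: spectral_diag_real. Qed.

Lemma spectral_eigvec k : eigvec G (d 0 k) (P ^t* *m delta_mx k 0).
Proof.
split.
  apply/negP => /eqP/(congr1 (mulmx P)).
  rewrite mulmxA (unitarymxP P_unitary) mul1mx mulmx0 => /matrixP/(_ k 0).
  by rewrite !mxE !eqxx => /eqP; rewrite oner_eq0.
rewrite {1}hermitian_spectralE -!mulmxA (mulmxA P) (unitarymxP _) // mul1mx.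
rewrite scalemxAr; congr (_ *m _); apply/matrixP => i j.
by rewrite mul_diag_mx !mxE; case: eqP => [->|]; rewrite ?mulr1 ?mulr0.
Qed.

Lemma qform_hermitian z : qform G z = \sum_k d 0 k * `|(P *m z) k 0| ^+ 2.
Proof. by rewrite {1}hermitian_spectralE qform_unitary qform_diag. Qed.

Lemma qform1_unitary z : qform 1%:M z = \sum_k `|(P *m z) k 0| ^+ 2.
Proof. by rewrite -qform1 -qform_unitary mulmx1 unitary_trmxC_mul. Qed.

Variable l : C.
Hypothesis d_le : forall k, d 0 k <= l.

Lemma rayleigh_gapE z :
  l * qform 1%:M z - qform G z = \sum_k (l - d 0 k) * `|(P *m z) k 0| ^+ 2.
Proof.
rewrite qform1_unitary qform_hermitian mulr_sumr -sumrB.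
by apply: eq_bigr => k _; rewrite mulrBl.
Qed.

Lemma rayleigh_gap_ge0 z k : 0 <= (l - d 0 k) * `|(P *m z) k 0| ^+ 2.
Proof. by rewrite mulr_ge0 ?exprn_ge0 // subr_ge0. Qed.

Lemma rayleigh_le z : qform G z <= l * qform 1%:M z.
Proof.
by rewrite -subr_ge0 rayleigh_gapE; apply: sumr_ge0 => k _; apply: rayleigh_gap_ge0.
Qed.

Lemma rayleigh_eq z : qform G z = l * qform 1%:M z -> G *m z = l *: z.
Proof.
move/esym/eqP; rewrite -subr_eq0 rayleigh_gapE => /eqP.
move/(psumr_eq0P (fun k _ => rayleigh_gap_ge0 z k)) => gap0.
have dPz : diag_mx d *m (P *m z) = l *: (P *m z).
  apply/matrixP => k j; rewrite ord1 mul_diag_mx mxE [RHS]mxE.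
  have /eqP := gap0 k isT; rewrite mulf_eq0 expf_eq0 /= normr_eq0 subr_eq0.
  by case/orP => /eqP ->; rewrite ?mulr0.
by rewrite {1}hermitian_spectralE -!mulmxA dPz -scalemxAr mulmxA unitary_trmxC_mul mul1mx.
Qed.

End Hermitian.
End Rayleigh.

Section PerronFrobenius.
Variables (C : numClosedFieldType) (n : nat).
Implicit Types (G : 'M[C]_n) (w x y : 'cV[C]_n) (l mu rho : C).

Lemma real_symmetric_hermsym G :
  G^T = G -> (forall i j, G i j \is Num.real) -> G \is hermsymmx.
Proof.
move=> G_sym G_real; apply: realsym_hermsym; last by apply/mxOverP.
by apply/is_hermitianmxP; rewrite expr0 scale1r map_mx_id ?G_sym.
Qed.

Lemma qform_norm_le G z : (forall i j, 0 <= G i j) ->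
  `|qform G z| <= qform G (map_mx normr z).
Proof.
move=> G_ge0; rewrite !qformE; apply: le_trans (ler_norm_sum _ _ _) _.
apply: ler_sum => i _; apply: le_trans (ler_norm_sum _ _ _) _; apply: ler_sum => j _.
by rewrite !mxE (conj_Creal (normr_real _)) !normrM norm_conjC (ger0_norm (G_ge0 i j)).
Qed.

Lemma nonneg_symmetric_eigvec G : (0 < n)%N -> G^T = G -> (forall i j, 0 <= G i j) ->
  exists l w, eigvec G l w /\ forall i, 0 <= w i 0.
Proof.
move=> n_gt0 G_sym G_ge0.
have G_herm := real_symmetric_hermsym G_sym (fun i j => ger0_real (G_ge0 i j)).
pose d := spectral_diag G.
have d_real k : d 0 k \is Num.real := spectral_diag_real G_herm k.
have [k0 _ d_le] := @real_arg_maxP _ _ (Ordinal n_gt0) predT (d 0) isT (fun k _ => d_real k).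
have [u_neq0 Gu] := spectral_eigvec G_herm k0.
set l := d 0 k0 in Gu; set u := _ *m _ in u_neq0 Gu.
pose w := map_mx normr u.
have qform1_abs : qform 1%:M w = qform 1%:M u.
  by rewrite !qform1; apply: eq_bigr => k _; rewrite mxE normr_id.
have qform_u : qform G u = l * qform 1%:M u.
  by rewrite /qform -mulmxA Gu -scalemxAr mulmx1 mxE.
have qform_u_real : qform G u \is Num.real.
  rewrite qform_u realM ?d_real // qform1 ger0_real //.
  by apply: sumr_ge0 => k _; rewrite exprn_ge0.
have qform_w : qform G w = l * qform 1%:M w.
  apply/le_anti; rewrite rayleigh_le //=; last by move=> k; apply: d_le.
  rewrite qform1_abs -qform_u; apply: le_trans (real_ler_norm qform_u_real) _.
  exact: qform_norm_le.
exists l, w; split; last by move=> i; rewrite mxE normr_ge0.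
split; last by apply: rayleigh_eq qform_w => // k; apply: d_le.
apply: contraNneq u_neq0 => w0; apply/eqP/matrixP => i j.
by have /matrixP /(_ i j) := w0; rewrite !mxE => /normr0_eq0.
Qed.

Lemma eigvec_entry G l x i :
  G *m x = l *: x -> l * x i 0 = \sum_j G i j * x j 0.
Proof. by move/(congr1 (fun v : 'cV[C]_n => v i 0)); rewrite !mxE => <-. Qed.

Lemma positive_eigvec_gt0 G l w : (forall i j, 0 < G i j) ->
  eigvec G l w -> (forall i, 0 <= w i 0) -> forall i, 0 < w i 0.
Proof.
move=> G_gt0 [/matrix0Pn [i0 [j0]]]; rewrite ord1 => wi0 Gw w_ge0 i.
have wi0_gt0 : 0 < w i0 0 by rewrite lt_def wi0 w_ge0.
have lw_gt0 : 0 < l * w i 0.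
  rewrite (eigvec_entry i Gw) (bigD1 i0) //= ltr_wpDr ?mulr_gt0 //.
  by apply: sumr_ge0 => j _; rewrite mulr_ge0 ?w_ge0 // ltW.
rewrite lt_def w_ge0 andbT; apply: contraTneq lw_gt0 => ->.
by rewrite mulr0 ltxx.
Qed.

Lemma eigvec_orthogonal G x y l mu : G^T = G ->
  G *m x = l *: x -> G *m y = mu *: y -> mu != l -> x^T *m y = 0.
Proof.
move=> G_sym Gx Gy mu_neq_l.
have : (l - mu) *: (x^T *m y) = 0.
  apply/eqP; rewrite scalerBl subr_eq0 scalemxAl -linearZ /= -Gx trmx_mul G_sym -mulmxA Gy.
  by rewrite scalemxAr.
by move/eqP; rewrite scaler_eq0 subr_eq0 eq_sym (negbTE mu_neq_l) => /eqP.
Qed.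

Lemma eigenvalue_norm_le G x y rho mu : (forall i j, 0 <= G i j) ->
  (forall i, 0 < x i 0) -> G *m x = rho *: x -> eigvec G mu y -> `|mu| <= rho.
Proof.
move=> G_ge0 x_gt0 Gx [/matrix0Pn [i0 [j0]]]; rewrite ord1 => yi0 Gy.
(* Compare the two eigen-equations at an index maximizing [|y j| / x j]. *)
pose t j := `|y j 0| / x j 0.
have t_real j : t j \is Num.real by rewrite ger0_real // divr_ge0 // ltW.
have [k _ t_le] := @real_arg_maxP _ _ i0 predT t isT (fun j _ => t_real j).
have y_le j : `|y j 0| <= t k * x j 0 by rewrite -ler_pdivrMr //; exact: t_le.
have yk : `|y k 0| = t k * x k 0 by rewrite divfK ?gt_eqF.
have yk_gt0 : 0 < `|y k 0|.
  by rewrite yk pmulr_lgt0 // (lt_le_trans _ (t_le i0 isT)) // divr_gt0 ?normr_gt0.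
rewrite -(ler_pM2r yk_gt0) -normrM.
rewrite (eigvec_entry k Gy).
apply: le_trans (ler_norm_sum _ _ _) _.
have -> : rho * `|y k 0| = \sum_j G k j * (t k * x j 0).
  by rewrite yk mulrCA (eigvec_entry k Gx) mulr_sumr; apply: eq_bigr => j _; rewrite mulrCA.
by apply: ler_sum => j _; rewrite normrM ger0_norm // ler_wpM2l.
Qed.

Section Deflation.
Variables (G : 'M[C]_n) (m M l : C) (x : 'cV[C]_n).
Hypotheses (G_bounds : forall i j, m <= G i j <= M) (m_gt0 : 0 < m).
Hypotheses (x_gt0 : forall i, 0 < x i 0) (Gx : G *m x = l *: x).
Let S := \sum_i x i 0.

Lemma perron_entry_bounds a : m * S <= l * x a 0 <= M * S.
Proof.
rewrite (eigvec_entry a Gx) /S !mulr_sumr.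
by apply/andP; split; apply: ler_sum => b _;
  rewrite ler_pM2r //; case/andP: (G_bounds a b).
Qed.

Section NonEmpty.
(* An index, i.e. a witness of [0 < n]. *)
Variable i0 : 'I_n.

Let S_gt0 : 0 < S.
Proof.
by rewrite /S (bigD1 i0) //= ltr_wpDr // sumr_ge0 // => i _; rewrite ltW.
Qed.

Lemma perron_value_gt0 : 0 < l.
Proof.
have /andP [mS_le _] := perron_entry_bounds i0.
have : 0 < l * x i0 0 by rewrite (lt_le_trans _ mS_le) ?mulr_gt0.
by rewrite pmulr_lgt0.
Qed.

Let M_gt0 : 0 < M.
Proof.
by case/andP: (G_bounds i0 i0) => le_m le_M; apply: lt_le_trans m_gt0 (le_trans le_m le_M).
Qed.

Lemma perron_value_bounds : m *+ n <= l <= M *+ n.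
Proof.
have sumE c : \sum_(a < n) c * S = c *+ n * S by rewrite sumr_const card_ord mulrnAl.
rewrite -[m *+ n <= l](ler_pM2r S_gt0) -[l <= M *+ n](ler_pM2r S_gt0) -!sumE.
have -> : l * S = \sum_a l * x a 0 by rewrite mulr_sumr.
by apply/andP; split; apply: ler_sum => a _; case/andP: (perron_entry_bounds a).
Qed.

Lemma perron_entry_ratio a b : x a 0 / x b 0 <= M / m.
Proof.
rewrite ler_pdivrMr // mulrAC ler_pdivlMr // -(ler_pM2l perron_value_gt0) mulrA mulrCA.
have /andP [_ xa_le] := perron_entry_bounds a; have /andP [xb_ge _] := perron_entry_bounds b.
apply: le_trans (_ : M * S * m <= _); first by rewrite ler_pM2r.
by rewrite -mulrA [S * m]mulrC ler_pM2l.
Qed.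

(* As [0 <= l * x i 0 <= M * S], subtracting [c0 *: (x *m x^T)] keeps [G] nonnegative. *)
Let c0 := m * l ^+ 2 / (M * S) ^+ 2.

Let deflation_ge0 i j : 0 <= G i j - c0 * (x i 0 * x j 0).
Proof.
have /andP [mS_i le_i] := perron_entry_bounds i.
have /andP [mS_j le_j] := perron_entry_bounds j.
rewrite subr_ge0; apply: le_trans (_ : m <= G i j); last by case/andP: (G_bounds i j).
have -> : c0 * (x i 0 * x j 0) = m * ((l * x i 0) * (l * x j 0)) / (M * S) ^+ 2.
  by rewrite /c0; field; rewrite !gt_eqF.
rewrite ler_pdivrMr ?exprn_gt0 ?mulr_gt0 // ler_pM2l // expr2.
by rewrite ler_pM // (le_trans _ mS_i, le_trans _ mS_j) // mulr_ge0 // ltW.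
Qed.

Lemma orthogonal_eigenvalue_le mu y :
  eigvec G mu y -> x^T *m y = 0 -> `|mu| <= l - (m / M) ^+ 2 * l.
Proof.
move=> [y_neq0 Gy] xy.
pose q := \sum_a x a 0 ^+ 2.
pose B := G - c0 *: (x *m x^T).
have B_ge0 i j : 0 <= B i j by rewrite !mxE big_ord1 !mxE deflation_ge0.
have Bx : B *m x = (l - c0 * q) *: x.
  have xTx : x^T *m x = q%:M.
    apply/matrixP => ? ?; rewrite !ord1 !mxE mulr1n.
    by apply: eq_bigr => a _; rewrite mxE expr2.
  by rewrite mulmxBl Gx -scalemxAl -mulmxA xTx mul_mx_scalar scalerA scalerBl.
have By : B *m y = mu *: y.
  by rewrite mulmxBl Gy -scalemxAl -mulmxA xy mulmx0 scaler0 subr0.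
apply: le_trans (eigenvalue_norm_le B_ge0 x_gt0 Bx (conj y_neq0 By)) _.
rewrite lerD2l lerN2.
have lq_ge : m * S ^+ 2 <= l * q.
  rewrite expr2 mulrA /S mulr_sumr /q mulr_sumr; apply: ler_sum => a _.
  by rewrite expr2 mulrA ler_pM2r //; case/andP: (perron_entry_bounds a).
have -> : c0 * q = m * l * (l * q) / (M * S) ^+ 2 by rewrite /c0; field; rewrite !gt_eqF.
rewrite ler_pdivlMr ?exprn_gt0 ?mulr_gt0 //.
have -> : (m / M) ^+ 2 * l * (M * S) ^+ 2 = m * l * (m * S ^+ 2).
  by field; rewrite gt_eqF.
by rewrite ler_pM2l ?mulr_gt0 ?perron_value_gt0.
Qed.

Lemma perron_eigvec_unique y : G *m y = l *: y -> exists c, y = c *: x.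
Proof.
move=> Gy; pose q := (x^T *m x) 0 0; pose k := (x^T *m y) 0 0 / q.
have q_gt0 : 0 < q.
  rewrite /q mxE (bigD1 i0) //= ltr_wpDr ?mxE ?mulr_gt0 //.
  by apply: sumr_ge0 => a _; rewrite mxE mulr_ge0 ?ltW.
(* [y - k x] is orthogonal to [x], so it cannot be an eigenvector for [l]. *)
exists k; apply/eqP; rewrite -subr_eq0; apply/negPn/negP => w_neq0.
have xw : x^T *m (y - k *: x) = 0.
  rewrite mulmxBr -scalemxAr; apply/eqP; rewrite subr_eq0; apply/eqP/matrixP => ? ?.
  by rewrite !ord1 [RHS]mxE /k divfK ?gt_eqF.
have Gw : G *m (y - k *: x) = l *: (y - k *: x).
  by rewrite mulmxBr -scalemxAr Gx Gy scalerBr !scalerA mulrC.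
have := orthogonal_eigenvalue_le (conj w_neq0 Gw) xw.
have l_gt0 := perron_value_gt0.
have gap_gt0 : 0 < (m / M) ^+ 2 * l by rewrite mulr_gt0 ?exprn_gt0 ?divr_gt0.
by rewrite (ger0_norm (ltW l_gt0)) lerDl oppr_ge0 (lt_geF gap_gt0).
Qed.

End NonEmpty.
End Deflation.

Theorem symmetric_perron G m M : (0 < n)%N -> G^T = G -> 0 < m ->
    (forall i j, m <= G i j <= M) ->
  exists l x, [/\ 0 < l, forall i, 0 < x i 0, G *m x = l *: x,
    (forall y, G *m y = l *: y -> exists c, y = c *: x) &
    (forall mu y, eigvec G mu y -> mu != l -> mu <= l - (m / M) ^+ 2 * l)].
Proof.
move=> n_gt0 G_sym m_gt0 G_bounds; pose i0 := Ordinal n_gt0.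
have G_gt0 i j : 0 < G i j by case/andP: (G_bounds i j) => /(lt_le_trans m_gt0).
have [l [w [[w_neq0 Gw] w_ge0]]] :=
  nonneg_symmetric_eigvec n_gt0 G_sym (fun i j => ltW (G_gt0 i j)).
have w_gt0 := positive_eigvec_gt0 G_gt0 (conj w_neq0 Gw) w_ge0.
have G_herm := real_symmetric_hermsym G_sym (fun i j => gtr0_real (G_gt0 i j)).
exists l, w; split => //.
- exact: perron_value_gt0 G_bounds m_gt0 w_gt0 Gw i0.
- exact: perron_eigvec_unique G_bounds m_gt0 w_gt0 Gw i0.
move=> mu y eig_y mu_neq_l.
apply: le_trans (real_ler_norm (hermitian_eigenvalue_real G_herm eig_y)) _.
have [_ Gy] := eig_y.
exact: orthogonal_eigenvalue_le G_bounds m_gt0 w_gt0 Gw i0 _ _ eig_y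
  (eigvec_orthogonal G_sym Gw Gy mu_neq_l).
Qed.

End PerronFrobenius.

Section DiagonalSubspace.
Local Open Scope complex_scope.
Variables (R : rcfType) (D : nat).
Local Notation C := R[i].
Implicit Types (F : 'M[R]_D) (y : 'cV[C]_D) (v : 'cV[C]_(D * D)) (mu : C).

Definition diag_index (a : 'I_D) : 'I_(D * D) := mxtens_index (a, a).

Lemma diag_index_eq a b : (diag_index a == diag_index b) = (a == b).
Proof. by rewrite (can_eq (@mxtens_indexK D D)) xpair_eqE andbb. Qed.

Lemma ket2E a : ket2 R a = delta_mx (diag_index a) 0.
Proof.
apply/matrixP => i j; case: (mxtens_indexP i) => p q.
rewrite !mxE !mxtens_indexK /= !ord1 (can_eq (@mxtens_indexK D D)) xpair_eqE.
by case: (p == a); case: (q == a); rewrite ?mulr1 ?mulr0.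
Qed.

Definition diag_embed y : 'cV[C]_(D * D) := \sum_a y a 0 *: ket2 R a.

Definition diag_part v : 'cV[C]_D := \col_a v (diag_index a) 0.

Lemma diag_embedK : cancel diag_embed diag_part.
Proof.
move=> y; apply/matrixP => a j; rewrite ord1 mxE summxE (bigD1 a) //= big1 ?addr0.
  by rewrite ket2E !mxE eqxx mulr1.
by move=> b b_neq_a; rewrite ket2E !mxE diag_index_eq eq_sym (negbTE b_neq_a) mulr0.
Qed.

Lemma diag_embedZ c y : diag_embed (c *: y) = c *: diag_embed y.
Proof. by rewrite scaler_sumr; apply: eq_bigr => a _; rewrite mxE scalerA. Qed.

Lemma diag_embed0 : diag_embed 0 = 0.
Proof. by rewrite /diag_embed big1 // => a _; rewrite mxE scale0r. Qed.

Lemma diag_partZ c v : diag_part (c *: v) = c *: diag_part v.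
Proof. by apply/matrixP => a j; rewrite !mxE. Qed.

(* [Kop F] vanishes off the span of the [ket2 a]; [Kgram F] is its matrix on that span. *)
Definition Kgram F : 'M[C]_D := \matrix_(a, b) (F a b ^+ 2 / D%:R)%:C.

Lemma KopE F v : Kop F *m v = diag_embed (Kgram F *m diag_part v).
Proof.
rewrite /Kop -scalemxAl mulmx_suml scaler_sumr; apply: eq_bigr => a _.
rewrite mulmx_suml scaler_sumr mxE scaler_suml; apply: eq_bigr => b _.
have row_v : row (diag_index b) v = (v (diag_index b) 0)%:M.
  by apply/matrixP => ? ?; rewrite !ord1 !mxE mulr1n.
rewrite -scalemxAl -mulmxA [ket2 R b]ket2E trmx_delta -rowE row_v mul_mx_scalar.
by rewrite !scalerA !mxE (rmorphM _ (F a b ^+ 2)) fmorphV rmorph_nat [_^-1 * _]mulrC.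
Qed.

Lemma Kop_eigvec F mu v :
  eigvec (Kop F) mu v -> mu = 0 \/ eigvec (Kgram F) mu (diag_part v).
Proof.
case=> v_neq0 Kv; have [dv0|dv_neq0] := eqVneq (diag_part v) 0; [left | right].
  move: Kv; rewrite KopE dv0 mulmx0 diag_embed0 => /eqP.
  by rewrite eq_sym scaler_eq0 (negbTE v_neq0) orbF => /eqP.
by split => //; rewrite -[LHS]diag_embedK -KopE Kv diag_partZ.
Qed.

Lemma Kop_eigvec_range F mu v : mu != 0 -> Kop F *m v = mu *: v ->
  v = diag_embed (diag_part v).
Proof.
move=> mu_neq0 Kv; apply: (scalerI mu_neq0).
by rewrite -Kv KopE -diag_embedZ -diag_partZ -Kv KopE diag_embedK.
Qed.

Lemma Kgram_sym F : F^T = F -> (Kgram F)^T = Kgram F.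
Proof. by move=> F_sym; apply/matrixP => a b; rewrite !mxE -[in RHS]F_sym mxE. Qed.

Lemma Kgram_bounds F (f : R) : (0 < D)%N -> 0 <= f ->
    (forall a b, f <= F a b <= 1) ->
  forall a b, (f ^+ 2 / D%:R)%:C <= Kgram F a b <= (D%:R^-1)%:C.
Proof.
move=> D_gt0 f_ge0 F_bounds a b; have /andP [f_le F_le1] := F_bounds a b.
have F_ge0 : 0 <= F a b := le_trans f_ge0 f_le.
have invD_gt0 : 0 < (D%:R : R)^-1 by rewrite invr_gt0 ltr0n.
rewrite mxE !lecR; apply/andP; split; first by rewrite ler_pM2r // lerXn2r.
by rewrite -[X in _ <= X]mul1r ler_pM2r // exprn_ile1.
Qed.

Lemma diag_embed_eigvec F mu y :
  eigvec (Kgram F) mu y -> eigvec (Kop F) mu (diag_embed y).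
Proof.
case=> y_neq0 Gy; split; last by rewrite KopE diag_embedK Gy diag_embedZ.
apply: contraNneq y_neq0 => y0; rewrite -(diag_embedK y) y0.
by apply/eqP/matrixP => a j; rewrite !mxE.
Qed.

Lemma top_gap_intro n (M : 'M[C]_n) (l g : R) (v : 'cV[C]_n) :
    0 <= g -> eigvec M l%:C v ->
    (forall w, M *m w = l%:C *: w -> exists c, w = c *: v) ->
    (forall mu w, eigvec M mu w -> mu != l%:C -> mu <= (l - g)%:C) ->
  top_gap M l g v.
Proof.
move=> g_ge0 eig_v uniq gap; split => // [mu w eig_w|w [_ Mw]]; last exact: uniq.
have [->//|mu_neq_l] := eqVneq mu l%:C.
by rewrite (le_trans (gap _ _ eig_w mu_neq_l)) // lecR gerBl.
Qed.

Lemma top_gap_Kop F (l g : R) y : 0 < l -> g <= l ->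
  top_gap (Kgram F) l g y -> top_gap (Kop F) l g (diag_embed y).
Proof.
move=> l_gt0 g_le_l [eig_y top_le uniq gap]; split.
- exact: diag_embed_eigvec.
- by move=> mu v /Kop_eigvec [->|/top_le //]; rewrite lecR ltW.
- move=> v eig_v; have l_neq0 : l%:C != 0 by rewrite gt_eqF // ltcR.
  have [l0|/uniq [c dv_c]] := Kop_eigvec eig_v; first by rewrite l0 eqxx in l_neq0.
  exists c; case: eig_v => _ Kv.
  by rewrite (Kop_eigvec_range l_neq0 Kv) dv_c diag_embedZ.
- by move=> mu v /Kop_eigvec [-> _|/gap //]; rewrite lecR subr_ge0.
Qed.

Lemma top_gap_shift n (K : 'M[C]_n) (l g a e : R) (v : 'cV[C]_n) : 0 < e ->
  top_gap K l g v ->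
  top_gap ((a%:C)%:M + e%:C *: K) (a + e * l) (e * g) v.
Proof.
move=> e_gt0 [[v_neq0 Kv] top_le uniq gap].
have e_neq0 : e%:C != 0 by rewrite gt_eqF // ltcR.
pose shift (mu : C) := a%:C + e%:C * mu.
have MwE w : ((a%:C)%:M + e%:C *: K) *m w = a%:C *: w + e%:C *: (K *m w).
  by rewrite mulmxDl mul_scalar_mx -scalemxAl.
have eig_shift mu w : eigvec ((a%:C)%:M + e%:C *: K) mu w ->
    eigvec K ((mu - a%:C) / e%:C) w /\ mu = shift ((mu - a%:C) / e%:C).
  case=> w_neq0 Mw; split; last by rewrite /shift mulrC divfK // addrC subrK.
  split => //; apply: (scalerI e_neq0).
  by rewrite scalerA mulrC divfK // scalerBl -Mw MwE addrC addKr.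
have top_shift : (a + e * l)%:C = shift l%:C by rewrite rmorphD rmorphM.
have gap_shift : (a + e * l - e * g)%:C = shift (l - g)%:C.
  by rewrite -addrA -mulrBr rmorphD rmorphM.
split.
- by split => //; rewrite MwE Kv scalerA -scalerDl top_shift.
- by move=> mu w /eig_shift [/top_le le_top ->]; rewrite top_shift lerD2l ler_pM2l ?ltcR.
- move=> w /eig_shift [eig_w _]; apply: uniq.
  by move: eig_w; rewrite top_shift /shift addrC addKr mulrC mulKf.
- move=> mu w /eig_shift [eig_w ->] mu_neq; rewrite gap_shift lerD2l ler_pM2l ?ltcR //.
  by apply: gap eig_w _; apply: contraNneq mu_neq => ->; rewrite top_shift.
Qed.

Lemma Psi_diag_embed (x : 'I_D -> R) : Psi x = diag_embed (\col_a (x a)%:C).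
Proof. by apply: eq_bigr => a _; rewrite mxE. Qed.

Lemma Kgram_perron F (f : R) : (0 < D)%N -> 0 < f -> f <= 1 -> F^T = F ->
    (forall a b, f <= F a b <= 1) ->
  exists (lam : R) (x : 'I_D -> R),
    [/\ forall a, 0 < x a, forall a b, x a / x b <= (f ^+ 2)^-1,
        f ^+ 2 <= lam <= 1 & top_gap (Kgram F) lam (f ^+ 4 * lam) (\col_a (x a)%:C)].
Proof.
move=> D_gt0 f_gt0 f_le1 F_sym F_bounds; pose i0 := Ordinal D_gt0.
have D_neq0 : (D%:R : R) != 0 by rewrite pnatr_eq0 -lt0n.
pose lo := (f ^+ 2 / D%:R)%:C; pose hi := ((D%:R : R)^-1)%:C.
have lo_gt0 : 0 < lo by rewrite ltcR divr_gt0 ?exprn_gt0 ?ltr0n.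
have G_bounds : forall a b, lo <= Kgram F a b <= hi :=
  Kgram_bounds D_gt0 (ltW f_gt0) F_bounds.
have [l [x [l_gt0 x_gt0 Gx uniq gap]]] :=
  symmetric_perron D_gt0 (Kgram_sym F_sym) lo_gt0 G_bounds.
have lo_hi : lo / hi = (f ^+ 2)%:C by rewrite -fmorphV -rmorphM invrK divfK.
pose lam := complex.Re l; have lE : lam%:C = l := RRe_real (gtr0_real l_gt0).
pose xr a := complex.Re (x a 0).
have xE a : (xr a)%:C = x a 0 := RRe_real (gtr0_real (x_gt0 a)).
have colE : \col_a (xr a)%:C = x by apply/matrixP => a j; rewrite ord1 mxE xE.
exists lam, xr; split.
- by move=> a; have := x_gt0 a; rewrite -xE ltcR.
- move=> a b; have := perron_entry_ratio G_bounds lo_gt0 x_gt0 Gx i0 a b.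
  by rewrite -[hi / lo]invf_div lo_hi -!xE -!fmorphV -rmorphM lecR.
- have loD : lo *+ D = (f ^+ 2)%:C by rewrite -rmorphMn -mulr_natr divfK.
  have hiD : hi *+ D = 1%:C by rewrite -rmorphMn -mulr_natr mulVf.
  by have := perron_value_bounds G_bounds x_gt0 Gx i0; rewrite loD hiD -lE !lecR.
rewrite colE; apply: top_gap_intro; rewrite ?lE //.
- by rewrite mulr_ge0 ?exprn_ge0 // ltW // -ltcR lE.
- by split=> //; apply: contraTneq (x_gt0 i0) => ->; rewrite mxE ltxx.
move=> mu y eig_y /(gap _ _ eig_y).
by rewrite lo_hi -lE -rmorphXn -rmorphM -rmorphB -exprM.
Qed.

End DiagonalSubspace.

Local Open Scope complex_scope.

Theorem mainTheorem7 (R : rcfType) (D : nat) (f : R) (F : 'M[R]_D) :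
  (0 < D)%N -> 0 < f -> f <= 1 -> F^T = F ->
  (forall a b, f <= F a b <= 1) ->
  exists (lambda : R) (x : 'I_D -> R),
    [/\ (forall a, 0 < x a),
        (forall a b, x a / x b <= (f ^+ 2)^-1),
        f ^+ 2 <= lambda <= 1,
        top_gap (Kop F) lambda (f ^+ 4 * lambda) (Psi x) &
        (forall a eps : R, 0 < eps ->
           top_gap ((a%:C)%:M + (eps ^+ 2)%:C *: Kop F)
                   (a + eps ^+ 2 * lambda) (eps ^+ 2 * f ^+ 4 * lambda) (Psi x))].
Proof.
move=> D_gt0 f_gt0 f_le1 F_sym F_bounds.
have [lam [x [x_gt0 x_ratio lam_bounds top]]] :=
  Kgram_perron D_gt0 f_gt0 f_le1 F_sym F_bounds.
have lam_gt0 : 0 < lam by rewrite (lt_le_trans _ (andP lam_bounds).1) ?exprn_gt0.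
have top_K : top_gap (Kop F) lam (f ^+ 4 * lam) (Psi x).
  rewrite Psi_diag_embed; apply: top_gap_Kop => //.
  exact: ler_piMl (ltW lam_gt0) (exprn_ile1 _ (ltW f_gt0) f_le1).
exists lam, x; split => // a eps eps_gt0.
by rewrite -mulrA; apply: top_gap_shift; rewrite ?exprn_gt0.
Qed.
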